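(* Let $\alpha>0$, $R>0$, $B>R$. In the Gaussian white noise model $dX^{(n)}(t)=f(t)dt+n^{-1/2}dW(t)$ on $[0,1]$, let $x_{lk}=\int_0^1\psi_{lk}dX^{(n)}=f_{lk}+n^{-1/2}\varepsilon_{lk}$ with $f_{lk}=\langle f,\psi_{lk}\rangle_2$ and $\varepsilon_{lk}$ i.i.d. $N(0,1)$. Suppose the true $f_0$ satisfies $\sup_{l,k}2^{l(1/2+\alpha)}|f_{0,lk}|\le R$. Let the prior $\Pi$ make the $f_{lk}$ independent with Lebesgue density $\sigma_l^{-1}\varphi(\cdot/\sigma_l)$ on $\mathbb{R}$, where $\varphi=\frac1{2B}\mathbf 1_{[-B,B]}$ and $\sigma_l=2^{-l(1/2+\alpha)}$. Let $L_n=\lfloor\log_2((n/\log n)^{1/(2\alpha+1)})\rfloor$. Then there exists $C>0$ such that for every real $t$, every $n\ge2$, every $0\le l\le L_n$ and every $0\le k\le2^l-1$, $$E_{f_0}^n\,E^\Pi\big[e^{t\sqrt n(f_{lk}-x_{lk})}\mid X^{(n)}\big]\le Ce^{t^2/2}.$$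
   Context: $\{\psi_{lk}\}$ is a (Cohen–Daubechies–Vial boundary-corrected) wavelet orthonormal basis of $L^2[0,1]$ indexed by $l\ge0$, $0\le k\le2^l-1$. $E^\Pi[\cdot\mid X^{(n)}]$ denotes expectation under the posterior distribution and $E^n_{f_0}$ expectation under the model with $f=f_0$. *)

From HB Require Import structures.
From mathcomp Require Import all_boot all_order all_algebra.
From mathcomp Require Import all_classical all_reals all_analysis.
Set Implicit Arguments. Unset Strict Implicit. Unset Printing Implicit Defensive.
Import Order.TTheory GRing.Theory Num.Theory.
Import numFieldNormedType.Exports.
Local Open Scope classical_set_scope.
Local Open Scope ring_scope.

Definition sigma_l (R : realType) (alpha : R) (l : nat) : R :=
  2 `^ (- (l%:R * (2^-1 + alpha))).

Definition phiB (R : realType) (B : R) (u : R) : R :=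
  if `|u| <= B then (2 * B)^-1 else 0.

Definition prior_dens (R : realType) (alpha B : R) (l : nat) (f : R) : R :=
  (sigma_l alpha l)^-1 * phiB B (f / sigma_l alpha l).

Definition lik (R : realType) (n : nat) (x f : R) : R :=
  Num.sqrt (n%:R / (2 * pi)) * expR (- (n%:R / 2) * (x - f) ^+ 2).

Definition std_normal_pdf (R : realType) (e : R) : R :=
  (Num.sqrt (2 * pi))^-1 * expR (- (e ^+ 2) / 2).

(* Posterior expectation E^Pi[ g(f_{lk}) | X^(n) ] for the product prior in
   the Gaussian sequence model: by independence the posterior of f_{lk}
   depends on the data only through x_{lk}, and is given by Bayes' formula. *)
Definition post_exp (R : realType) (alpha B : R) (n l : nat) (g : R -> R) (x : R)
  : R :=
  Rintegral (@lebesgue_measure R) setT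
      (fun f => g f * prior_dens alpha B l f * lik n x f)
  / Rintegral (@lebesgue_measure R) setT
      (fun f => prior_dens alpha B l f * lik n x f).

Definition L_n (R : realType) (alpha : R) (n : nat) : int :=
  Num.floor (ln ((n%:R / ln n%:R) `^ (1 / (2 * alpha + 1))) / ln 2).

From HB Require Import structures.
From mathcomp Require Import all_boot all_order all_algebra.
From mathcomp Require Import all_classical all_reals all_analysis.
From mathcomp Require Import ring lra measurable_realfun.
Import Order.TTheory GRing.Theory Num.Theory.
Import numFieldNormedType.Exports.
Local Open Scope classical_set_scope.
Local Open Scope ring_scope.
Set Implicit Arguments. Unset Strict Implicit. Unset Printing Implicit Defensive.

(* The posterior of [f_lk] is the prior, flat with height [peak] on
   [-B sigma_l, B sigma_l], reweighted by a Gaussian likelihood centred at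
   [x = f0 + e / sqrt n].  Completing the square, [exp (t sqrt n (f - x))]
   times the likelihood is [exp (t^2/2)] times a normal density, so the
   numerator of Bayes' formula is at most [peak exp (t^2/2)].  Since
   [|f0| <= Rb sigma_l] and [sqrt n sigma_l >= sqrt (ln 2)] for [l <= L_n],
   the window of length [c / (2 sqrt n)], [c = (B - Rb) sqrt (ln 2)], placed
   at distance [c / (2 sqrt n)] from [f0] on the side of the noise [e] lies
   in the flat part of the prior; there the likelihood is at least
   [sqrt n phi(e) exp (c |e| / 2 - c^2 / 2)].  Hence [phi(e)] times the
   posterior mean is [O (exp (t^2/2 - c |e| / 2))], which integrates in [e]. *)

Local Notation mu := (@lebesgue_measure _).

Section lebesgue_integral_bounds.
Variable R : realType.

(* No measurability is needed: the integral of a nonnegative function is a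
   supremum over the simple functions below it. *)
Lemma ge0_le_integralT (f g : R -> \bar R) : (forall x, 0 <= f x)%E ->
  (forall x, f x <= g x)%E ->
  (\int[mu]_(x in setT) f x <= \int[mu]_(x in setT) g x)%E.
Proof.
move=> f0 fg.
have g0 x : (0 <= g x)%E by exact: le_trans (f0 x) (fg x).
rewrite !ge0_integralTE //.
apply: ereal_sup_le => _ [h hf <-]; exists h => //= x.
exact: le_trans (hf x) (fg x).
Qed.

Lemma measurable_expRM_abs (c : R) :
  measurable_fun setT (fun x : R => expR (c * `|x|)).
Proof. by apply: measurableT_comp => //; exact: measurable_funM. Qed.

Lemma integral_expR_itv0y (c : R) : 0 < c ->
  (\int[mu]_(x in `[0%R, +oo[) (expR (- c * x))%:E = (c^-1)%:E)%E.
Proof.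
move=> c0.
have mexp : measurable_fun setT (fun x : R => expR (- c * x)).
  by apply: measurableT_comp => //; exact: measurable_funM.
have h1 : (\int[mu]_(x in `[0%R, +oo[) (c%:E * (expR (- c * x))%:E) = 1)%E.
  rewrite -(integral_exponential_pdf c0) /exponential_pdf -/(comp EFin _).
  rewrite -restrict_EFin -integral_mkcond.
  by apply: eq_integral => x _; rewrite /= EFinM.
rewrite ge0_integralZl_EFin //in h1; last 2 first.
- by apply/measurable_EFinP; exact: measurable_funTS.
- exact: ltW.
by rewrite -[LHS]mul1e -(@mulVf _ c) ?gt_eqF // EFinM -muleA h1 mule1.
Qed.

Lemma integral_expR_abs (c : R) : 0 < c ->
  (\int[mu]_(x in setT) (expR (- c * `|x|))%:E = (2 / c)%:E)%E.
Proof.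
move=> c0.
have mexp : measurable_fun setT (EFin \o fun x : R => expR (- c * `|x|)).
  by apply/measurable_EFinP; exact: measurable_expRM_abs.
have -> : [set: R] = `]-oo, 0%R] `|` `]0%R, +oo[.
  apply/seteqP; split => x //= _; rewrite !in_itv /= andbT.
  by case: (lerP x 0) => _; [left|right].
rewrite ge0_integral_setU //=; first last.
- rewrite disj_set2E; apply/eqP; apply/seteqP; split => // x [] /=.
  by rewrite !in_itv /= andbT => /le_lt_trans h /h; rewrite ltxx.
- exact: measurable_funTS.
rewrite -[2]/(1 + 1) mulrDl mul1r EFinD; congr (_ + _)%E.
- transitivity (\int[mu]_(x in `]-oo, (- 0)%R]) (expR (c * x))%:E)%E.
    rewrite oppr0; apply: eq_integral => x; rewrite inE /= in_itv /= => x0.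
    by rewrite ler0_norm // mulrN mulNr opprK.
  rewrite ge0_integration_by_substitutionNy; last 2 first.
  + apply: continuous_subspaceT => x; apply: continuous_comp; last first.
      exact: continuous_expR.
    by apply: continuousM => //; exact: cst_continuous.
  + by move=> x _; exact: expR_ge0.
  rewrite -(integral_expR_itv0y c0); apply: eq_integral => x _ /=.
  by rewrite mulrN mulNr.
- rewrite integral_itv_obnd_cbnd; last exact: measurable_funTS.
  rewrite -(integral_expR_itv0y c0); apply: eq_integral => x.
  by rewrite inE /= in_itv /= andbT => x0; rewrite ger0_norm.
Qed.

Lemma integral_le_expR_abs (h : R -> R) (K c : R) : 0 < c ->
  (forall x, 0 <= h x <= K * expR (- c * `|x|)) ->
  (\int[mu]_(x in setT) (h x)%:E <= (K * (2 / c))%:E)%E.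
Proof.
move=> c0 hK.
have K0 : 0 <= K.
  by have /andP[h0 /(le_trans h0)] := hK 0; rewrite normr0 mulr0 expR0 mulr1.
apply: le_trans (ge0_le_integralT (g := fun x => (K * expR (- c * `|x|))%:E) _ _) _.
- by move=> x; rewrite lee_fin; case/andP: (hK x).
- by move=> x; rewrite lee_fin; case/andP: (hK x).
under eq_integral do rewrite EFinM.
rewrite ge0_integralZl_EFin //; last first.
  by apply/measurable_EFinP; exact: measurable_expRM_abs.
by rewrite integral_expR_abs.
Qed.

Lemma integral_cst_indic_itv (k a b : R) : 0 <= k -> a <= b ->
  (\int[mu]_(x in setT) (k * \1_(`[a, b]%classic) x)%:E = (k * (b - a))%:E)%E.
Proof.
move=> k0 ab.
under eq_integral do rewrite EFinM.
rewrite ge0_integralZl_EFin //; last by apply/measurable_EFinP; exact: measurable_indic.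
rewrite integral_indic // setIT.
transitivity (k%:E * mu ([set` `[a, b]] : set R))%E; first by [].
rewrite lebesgue_measure_itv /= lte_fin.
case: ltP => ab'; first by rewrite -EFinD -EFinM.
have -> : b = a by apply/eqP; rewrite eq_le ab ab'.
by rewrite subrr mulr0 mule0.
Qed.

Lemma Rintegral_le_of_integral (h : R -> R) (U : R) : (forall x, 0 <= h x) ->
  (\int[mu]_(x in setT) (h x)%:E <= U%:E)%E ->
  0 <= Rintegral mu setT h <= U.
Proof.
move=> h0; rewrite /Rintegral.
have : (0 <= \int[mu]_(x in setT) (h x)%:E)%E.
  by apply: integral_ge0 => x _; rewrite lee_fin.
by case: (\int[mu]_(x in setT) (h x)%:E)%E => [r||] //=; rewrite !lee_fin => -> ->.
Qed.

(* The alternative [0] is the junk value of [Rintegral] on an infinite integral. *)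
Lemma Rintegral_eq0_or_ge (h : R -> R) (L : R) :
  (L%:E <= \int[mu]_(x in setT) (h x)%:E)%E ->
  Rintegral mu setT h = 0 \/ L <= Rintegral mu setT h.
Proof.
rewrite /Rintegral.
by case: (\int[mu]_(x in setT) (h x)%:E)%E => [r||] //=; rewrite ?lee_fin; [right|left].
Qed.

End lebesgue_integral_bounds.

Lemma sqr_sub_le {R : realFieldType} (e v c : R) :
  c / 2 <= `|v| <= c -> 0 <= e * v -> (e - v) ^+ 2 <= e ^+ 2 - c * `|e| + c ^+ 2.
Proof.
move=> /andP[vc2 vc] ev.
have ev_abs : e * v = `|e| * `|v| by rewrite -normrM ger0_norm.
have v2 : v ^+ 2 = `|v| ^+ 2 by rewrite real_normK ?num_real.
have e0 := normr_ge0 e; have v0 := normr_ge0 v.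
rewrite sqrrB ev_abs v2; nra.
Qed.

Definition prior_peak {R : realType} (alpha B : R) (l : nat) : R :=
  (sigma_l alpha l)^-1 * (2 * B)^-1.

Section prior.
Variables (R : realType) (alpha B : R).
Hypothesis B_gt0 : 0 < B.

Lemma sigma_lE l : sigma_l alpha l = expR (- (l%:R * (2^-1 + alpha)) * ln 2).
Proof. by rewrite /sigma_l /powR pnatr_eq0. Qed.

Lemma sigma_l_gt0 l : 0 < sigma_l alpha l.
Proof. by rewrite sigma_lE expR_gt0. Qed.

(* In fact [n * sigma_l^2 >= ln n]: this is what the [log n] in [L_n] buys. *)
Lemma ln2_le_mul_sigma_l_sqr (n l : nat) : 0 < alpha -> (2 <= n)%N ->
  l%:Z <= L_n alpha n -> ln 2 <= n%:R * sigma_l alpha l ^+ 2.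
Proof.
move=> a0 n2; rewrite /L_n floor_ge_int ln_powR => hl.
have n1 : 1 < n%:R :> R by rewrite ltr1n.
have n0 : 0 < n%:R :> R by lra.
have lnn : 0 < ln (n%:R : R) by exact: ln_gt0.
have ln2 : 0 < ln (2 : R) by apply: ln_gt0; lra.
have a21 : 0 < (2 * alpha + 1) * ln (2 : R) by apply: mulr_gt0 => //; lra.
have {}hl : l%:R * ((2 * alpha + 1) * ln 2) <= ln n%:R - ln (ln (n%:R : R)).
  rewrite -ln_div ?posrE //.
  move: hl; rewrite -(ler_pM2r a21) [X in _ <= X -> _](_ : _ = ln (n%:R / ln n%:R)) //.
  by field; rewrite !gt_eqF //; lra.
apply: le_trans (_ : ln n%:R <= _); first by rewrite ler_ln ?posrE ?ler_nat //; lra.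
have en : expR (ln (n%:R : R)) = n%:R by rewrite lnK ?posrE.
have eln : expR (ln (ln (n%:R : R))) = ln n%:R by rewrite lnK ?posrE.
rewrite -[X in X <= _]eln sigma_lE expr2 -expRD -[X in _ <= X * _]en -expRD.
by rewrite ler_expR; lra.
Qed.

Lemma le_mul_sigma_l l (x Rb : R) :
  2 `^ (l%:R * (2^-1 + alpha)) * `|x| <= Rb -> `|x| <= Rb * sigma_l alpha l.
Proof.
have P0 : 0 < 2 `^ (l%:R * (2^-1 + alpha)) :> R by apply: powR_gt0.
by rewrite /sigma_l powRN ler_pdivlMr // mulrC.
Qed.

Lemma window_le_flat_prior (Rb f0 : R) (n l : nat) :
  0 < alpha -> Rb < B -> (2 <= n)%N -> l%:Z <= L_n alpha n ->
  `|f0| <= Rb * sigma_l alpha l ->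
  `|f0| + (B - Rb) * Num.sqrt (ln 2) / Num.sqrt n%:R <= B * sigma_l alpha l.
Proof.
move=> a0 RbB n2 hl hf.
have sg0 := sigma_l_gt0 l.
have s0 : 0 < Num.sqrt (n%:R : R) by rewrite sqrtr_gt0 ltr0n (leq_trans _ n2).
have : Num.sqrt (ln 2) <= Num.sqrt n%:R * sigma_l alpha l.
  rewrite -(ger0_norm (ltW sg0)) -sqrtr_sqr -sqrtrM ?ler0n // ler_sqrt.
    exact: ln2_le_mul_sigma_l_sqr.
  by rewrite mulr_ge0 ?ler0n ?sqr_ge0.
rewrite -ler_pdivrMl // => h.
have : (B - Rb) * Num.sqrt (ln 2) / Num.sqrt n%:R <= (B - Rb) * sigma_l alpha l.
  by rewrite -mulrA; apply: ler_wpM2l; [rewrite subr_ge0 ltW | rewrite mulrC].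
lra.
Qed.

Lemma prior_peak_gt0 l : 0 < prior_peak alpha B l.
Proof. by rewrite /prior_peak mulr_gt0 ?invr_gt0 ?mulr_gt0 ?sigma_l_gt0. Qed.

Lemma prior_dens_ge0 l f : 0 <= prior_dens alpha B l f.
Proof.
rewrite /prior_dens /phiB; apply: mulr_ge0; first by rewrite invr_ge0 ltW ?sigma_l_gt0.
by case: ifP => _ //; rewrite invr_ge0 mulr_ge0 // ltW.
Qed.

Lemma prior_dens_le_peak l f : prior_dens alpha B l f <= prior_peak alpha B l.
Proof.
rewrite /prior_dens /phiB; apply: ler_wpM2l; first by rewrite invr_ge0 ltW ?sigma_l_gt0.
by case: ifP => _ //; rewrite invr_ge0 mulr_ge0 // ltW.
Qed.

Lemma prior_dens_peak l f : `|f| <= B * sigma_l alpha l ->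
  prior_dens alpha B l f = prior_peak alpha B l.
Proof.
move=> hf; rewrite /prior_dens /phiB ifT //.
have s0 := sigma_l_gt0 l.
by rewrite normrM [X in _ * X]gtr0_norm ?invr_gt0 // ler_pdivrMr.
Qed.

End prior.

Lemma std_normal_pdf_gt0 {R : realType} (e : R) : 0 < std_normal_pdf e.
Proof. by rewrite /std_normal_pdf mulr_gt0 ?expR_gt0 // invr_gt0 sqrtr_gt0 mulr_gt0 ?pi_gt0. Qed.

Section likelihood.
Variables (R : realType) (n : nat).
Hypothesis n_gt0 : (0 < n)%N.
Local Notation s := (Num.sqrt (n%:R : R)).

Let s_gt0 : 0 < s. Proof. by rewrite sqrtr_gt0 ltr0n. Qed.
Let s_sqr : s ^+ 2 = n%:R. Proof. by rewrite sqr_sqrtr // ler0n. Qed.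
Let pi_pos : 0 < pi :> R. Proof. exact: pi_gt0. Qed.

Lemma lik_ge0 (x f : R) : 0 <= lik n x f.
Proof. by rewrite /lik mulr_ge0 // expR_ge0. Qed.

Lemma likE (e w f0 : R) :
  lik n (f0 + e / s) (f0 + w) = s * std_normal_pdf (e - s * w).
Proof.
rewrite /lik /std_normal_pdf sqrtrM ?ler0n // sqrtrV ?mulr_ge0 ?ltW // [RHS]mulrA.
congr (_ * expR _); move: s_gt0 s_sqr; set u := Num.sqrt _ => u0 <-.
by field; rewrite gt_eqF.
Qed.

(* Completing the square. *)
Lemma tilted_likE (t x f : R) :
  expR (t * s * (f - x)) * lik n x f =
  expR (t ^+ 2 / 2) * normal_pdf (x + t / s) s^-1 f.
Proof.
have sV0 : s^-1 != 0 by rewrite invr_eq0 gt_eqF.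
rewrite normal_pdfE // /lik /normal_peak /normal_fun.
have -> : Num.sqrt (n%:R / (2 * pi)) = (Num.sqrt (s^-1 ^+ 2 * pi *+ 2))^-1.
  rewrite -sqrtrV; last by rewrite mulrn_wge0 // mulr_ge0 ?sqr_ge0 ?ltW.
  congr Num.sqrt; have := pi_pos; move: (pi : R) => p p0.
  move: s_gt0 s_sqr; set u := Num.sqrt _ => u0 <-.
  by field; rewrite !gt_eqF.
rewrite mulrCA -expRD [RHS]mulrCA -expRD; congr (_ * expR _).
move: s_gt0 s_sqr; set u := Num.sqrt _ => u0 <-.
by field; rewrite gt_eqF.
Qed.

Lemma lik_ge_window (f0 e w c : R) : c / 2 <= s * `|w| <= c -> 0 <= e * w ->
  s * std_normal_pdf e * expR (c * `|e| / 2 - c ^+ 2 / 2) <=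
  lik n (f0 + e / s) (f0 + w).
Proof.
move=> hw ew; rewrite likE /std_normal_pdf -!mulrA; apply: ler_wpM2l; first exact: ltW.
apply: ler_wpM2l; first by rewrite invr_ge0 sqrtr_ge0.
rewrite -expRD ler_expR.
have : (e - s * w) ^+ 2 <= e ^+ 2 - c * `|e| + c ^+ 2.
  apply: sqr_sub_le; first by rewrite normrM gtr0_norm.
  by rewrite mulrCA; apply: mulr_ge0 => //; exact: ltW.
lra.
Qed.

End likelihood.

Section posterior.
Variables (R : realType) (alpha B : R) (n l : nat).
Hypotheses (B_gt0 : 0 < B) (n_gt0 : (0 < n)%N).
Local Notation s := (Num.sqrt (n%:R : R)).
Local Notation peak := (prior_peak alpha B l).

Let s_gt0 : 0 < s. Proof. by rewrite sqrtr_gt0 ltr0n. Qed.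

Lemma post_num_bound (t x : R) :
  0 <= Rintegral mu setT
         (fun f => expR (t * s * (f - x)) * prior_dens alpha B l f * lik n x f)
  <= peak * expR (t ^+ 2 / 2).
Proof.
have h0 f : 0 <= expR (t * s * (f - x)) * prior_dens alpha B l f * lik n x f.
  by rewrite mulr_ge0 ?lik_ge0 // mulr_ge0 ?expR_ge0 ?prior_dens_ge0.
apply: Rintegral_le_of_integral => //.
pose g f := peak * expR (t ^+ 2 / 2) * normal_pdf (x + t / s) s^-1 f.
apply: le_trans (ge0_le_integralT (g := fun f => (g f)%:E) _ _) _.
- by move=> f; rewrite lee_fin.
- move=> f; rewrite lee_fin mulrAC tilted_likE // /g -mulrA mulrC.
  apply: ler_wpM2r; last exact: prior_dens_le_peak.
  by rewrite mulr_ge0 ?expR_ge0 ?normal_pdf_ge0.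
under eq_integral do rewrite EFinM.
rewrite ge0_integralZl_EFin //.
- by rewrite integral_normal_pdf mule1.
- by move=> f _; rewrite lee_fin normal_pdf_ge0.
- by apply/measurable_EFinP; exact: measurable_normal_pdf.
- by rewrite mulr_ge0 ?expR_ge0 ?ltW ?prior_peak_gt0.
Qed.

Lemma in_window (f0 e d f : R) : 0 < d ->
  f \in `[if 0 <= e then f0 + d / 2 else f0 - d,
          (if 0 <= e then f0 + d / 2 else f0 - d) + d / 2] ->
  d / 2 <= `|f - f0| <= d /\ 0 <= e * (f - f0).
Proof.
move=> d0; rewrite in_itv /=; case: (lerP 0 e) => e0 /andP[fa fb].
- rewrite ger0_norm; last lra.
  by split; [lra | rewrite mulr_ge0 //; lra].
- rewrite ler0_norm; last lra.
  by split; [lra | rewrite -mulrNN mulr_ge0 //; lra].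
Qed.

Lemma post_den_bound (f0 e c : R) : 0 < c ->
  `|f0| + c / s <= B * sigma_l alpha l ->
  Rintegral mu setT (fun f => prior_dens alpha B l f * lik n (f0 + e / s) f) = 0 \/
  peak * (c / 2) * std_normal_pdf e * expR (c * `|e| / 2 - c ^+ 2 / 2)
  <= Rintegral mu setT (fun f => prior_dens alpha B l f * lik n (f0 + e / s) f).
Proof.
move=> c0 hwin.
set d := c / s; have d0 : 0 < d by rewrite divr_gt0.
set a := if 0 <= e then f0 + d / 2 else f0 - d.
set k := peak * (s * std_normal_pdf e * expR (c * `|e| / 2 - c ^+ 2 / 2)).
have k0 : 0 <= k.
  apply/ltW; rewrite mulr_gt0 ?prior_peak_gt0 // mulr_gt0 ?expR_gt0 //.
  by rewrite mulr_gt0 ?std_normal_pdf_gt0.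
have -> : peak * (c / 2) * std_normal_pdf e * expR (c * `|e| / 2 - c ^+ 2 / 2)
          = k * (a + d / 2 - a).
  by rewrite /k /d; field; rewrite gt_eqF.
apply: Rintegral_eq0_or_ge.
rewrite -integral_cst_indic_itv //; last by rewrite lerDl ltW ?divr_gt0.
apply: ge0_le_integralT => f; rewrite lee_fin indicE.
  by rewrite mulr_ge0.
have [hf|] := boolP (f \in _); last first.
  by rewrite mulr0 mulr_ge0 ?prior_dens_ge0 ?lik_ge0.
have [hw ew] : d / 2 <= `|f - f0| <= d /\ 0 <= e * (f - f0).
  by apply: in_window d0 _; rewrite inE in hf.
have -> : f = f0 + (f - f0) by rewrite addrC subrK.
rewrite mulr1 prior_dens_peak //; last first.
  by apply: le_trans (ler_normD _ _) (le_trans _ hwin); rewrite lerD2l; case/andP: hw.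
apply: ler_wpM2l; first exact/ltW/prior_peak_gt0.
apply: lik_ge_window => //; rewrite (_ : c = s * d); last first.
  by rewrite /d; field; rewrite gt_eqF.
by rewrite -mulrA !ler_pM2l.
Qed.

Lemma std_normal_pdf_mul_post_exp_le (t f0 e c : R) : 0 < c ->
  `|f0| + c / s <= B * sigma_l alpha l ->
  0 <= std_normal_pdf e * post_exp alpha B n l
         (fun f => expR (t * s * (f - (f0 + e / s)))) (f0 + e / s)
    <= expR (t ^+ 2 / 2) * (2 / c * expR (c ^+ 2 / 2)) * expR (- (c / 2) * `|e|).
Proof.
move=> c0 hwin.
set Et := expR (t ^+ 2 / 2).
set X := expR (c * `|e| / 2 - c ^+ 2 / 2).
set L := peak * (c / 2) * std_normal_pdf e * X.
have phi0 := std_normal_pdf_gt0 e.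
have P0 := prior_peak_gt0 alpha B_gt0 l.
have L0 : 0 < L.
  apply: mulr_gt0; last exact: expR_gt0.
  by apply: mulr_gt0 => //; apply: mulr_gt0 => //; exact: divr_gt0.
suff key N D : 0 <= N <= peak * Et -> D = 0 \/ L <= D ->
    0 <= std_normal_pdf e * (N / D)
      <= Et * (2 / c * expR (c ^+ 2 / 2)) * expR (- (c / 2) * `|e|).
  by apply: key; [exact: post_num_bound | exact: post_den_bound].
move=> /andP[N0 NU] [->|LD].
  rewrite invr0 !mulr0 lexx /=; apply/ltW/mulr_gt0; last exact: expR_gt0.
  by rewrite mulr_gt0 ?expR_gt0 // mulr_gt0 ?expR_gt0 ?divr_gt0.
have D0 : 0 < D by exact: lt_le_trans LD.
apply/andP; split.
  by apply: mulr_ge0; [exact: ltW | apply: divr_ge0 => //; exact: ltW].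
apply: (@le_trans _ _ (std_normal_pdf e * (peak * Et / L))).
  rewrite ler_pM2l //; apply: ler_pM => //; first by rewrite invr_ge0 ltW.
  by rewrite lef_pV2 ?posrE.
have hX : X = (expR (c ^+ 2 / 2) * expR (- (c / 2) * `|e|))^-1.
  by rewrite -expRD -expRN /X; congr expR; ring.
by rewrite le_eqVlt /L hX; apply/orP; left; apply/eqP; field; rewrite !gt_eqF ?expR_gt0.
Qed.

End posterior.

Theorem lemma1 (R : realType) (alpha Rb B : R) (f0 : nat -> nat -> R) :
  0 < alpha -> 0 < Rb -> Rb < B ->
  (forall l k : nat, (k < 2 ^ l)%N ->
     2 `^ (l%:R * (2^-1 + alpha)) * `|f0 l k| <= Rb) ->
  exists C : R, 0 < C /\
    forall (t : R) (n l k : nat), (2 <= n)%N -> (l%:Z <= L_n alpha n)%R ->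
      (k < 2 ^ l)%N ->
      (\int[@lebesgue_measure R]_(e in setT)
         (std_normal_pdf e *
          post_exp alpha B n l
            (fun f => expR (t * Num.sqrt n%:R * (f - (f0 l k + e / Num.sqrt n%:R))))
            (f0 l k + e / Num.sqrt n%:R))%:E
       <= (C * expR (t ^+ 2 / 2))%:E)%E.
Proof.
move=> a0 Rb0 RbB hf0.
have B0 : 0 < B by exact: lt_trans RbB.
set c := (B - Rb) * Num.sqrt (ln 2).
have c0 : 0 < c by rewrite mulr_gt0 ?subr_gt0 // sqrtr_gt0 ln_gt0 // ltr1n.
set K := 2 / c * expR (c ^+ 2 / 2).
exists (K * (2 / (c / 2))); split.
  by rewrite !mulr_gt0 ?expR_gt0 ?invr_gt0 ?divr_gt0.
move=> t n l k n2 hl hk.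
have hwin : `|f0 l k| + c / Num.sqrt n%:R <= B * sigma_l alpha l.
  by apply: window_le_flat_prior => //; exact/le_mul_sigma_l/hf0.
apply: le_trans (integral_le_expR_abs (c := c / 2) _ _) _.
- by rewrite divr_gt0.
- move=> e; apply: std_normal_pdf_mul_post_exp_le => //.
  exact: leq_trans n2.
- by rewrite lee_fin [leRHS]mulrC [leRHS]mulrA.
Qed.
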